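(* For every $0<c<1$ there exist a constant $K>0$ and infinitely many positive integers $k$ such that, for each such $k$, there is an instance with committee size $k$ and an exhaustive affordable committee $W$ satisfying EJR whose utilitarian ratio is at most $K/k^{1-c}$.
   Context: An instance $(A,C,k)$ consists of a finite nonempty candidate set $C$, voters $N=\{1,\dots,n\}$, approval sets $A_i\subseteq C$, and a committee size $1\le k\le|C|$. A committee is $W\subseteq C$ with $|W|\le k$; it is exhaustive if $|W|=k$. $\mathrm{sw}(W)=\sum_i|A_i\cap W|$; the utilitarian ratio is $\mathrm{sw}(W)/\max\{\mathrm{sw}(W'):|W'|=k\}$. $W$ is affordable if there are $p_i:C\to\mathbb{R}_{\ge0}$ with $p_i(c)=0$ for $c\notin A_i$, $\sum_c p_i(c)\le k/n$, $\sum_i p_i(c)=1$ for $c\in W$, $\sum_i p_i(c)=0$ for $c\notin W$. $W$ satisfies EJR if for every $\ell\in\{1,\dots,k\}$ and every group $N'\subseteq N$ with $|N'|\ge\ell n/k$ and $|\bigcap_{i\in N'}A_i|\ge\ell$, some $i\in N'$ has $|A_i\cap W|\ge\ell$. *)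

From HB Require Import structures.
From mathcomp Require Import all_boot all_order all_algebra.
From mathcomp Require Import reals exp.
Set Implicit Arguments. Unset Strict Implicit. Unset Printing Implicit Defensive.
Import Order.TTheory GRing.Theory Num.Theory.
Local Open Scope ring_scope.

Section Defs.
Variables (C : finType) (n : nat) (A : 'I_n -> {set C}) (k : nat).

Definition valid_instance : Prop :=
  (0 < #|C|)%N /\ (0 < n)%N /\ (1 <= k)%N /\ (k <= #|C|)%N.

Definition committee (W : {set C}) : Prop := (#|W| <= k)%N.
Definition exhaustive (W : {set C}) : Prop := #|W| = k.

Definition sw (W : {set C}) : nat := (\sum_(i < n) #|A i :&: W|)%N.

Definition max_sw : nat := (\max_(W' : {set C} | #|W'| == k) sw W')%N.

Definition util_ratio (R : realType) (W : {set C}) : R :=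
  (sw W)%:R / (max_sw)%:R.

Definition affordable (R : realType) (W : {set C}) : Prop :=
  exists p : 'I_n -> C -> R,
    [/\ (forall i c, 0 <= p i c),
        (forall i c, c \notin A i -> p i c = 0),
        (forall i, \sum_(c : C) p i c <= k%:R / n%:R),
        (forall c, c \in W -> \sum_(i < n) p i c = 1) &
        (forall c, c \notin W -> \sum_(i < n) p i c = 0)].

Definition EJR (R : realType) (W : {set C}) : Prop :=
  forall (l : nat) (N' : {set 'I_n}),
    (1 <= l)%N -> (l <= k)%N ->
    (#|N'|%:R >= (l%:R * n%:R / k%:R :> R)) ->
    (l <= #|\bigcap_(i in N') A i|)%N ->
    exists2 i, i \in N' & (l <= #|A i :&: W|)%N.

End Defs.

(** The bad committee lives in an instance with [r] districts and [r] issues.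
    Every voter lives in one district and approves its [D] local candidates,
    and on every issue approves one of [D] options; voters range over all
    district/opinion profiles. Electing all [r * D] local candidates is
    affordable (each local candidate is paid for by the [D ^ r] voters of its
    district) and satisfies EJR: a group demanding [l > D] seats must agree
    either on a district, and then has at most [D ^ r] members, or on at
    least [l] issues, and then has at most [r * D ^ (r - l)] members; both
    are too few when [r <= D ^ D]. Every voter approves [r] issue options but
    only [D] local candidates, so the utilitarian ratio is at most [D / r],
    which for [r = D ^ D], i.e. [k = D ^ (D + 1)], is below [k ^ (c - 1)] as
    soon as [c * D > 2]. *)
From HB Require Import structures.
From mathcomp Require Import all_boot all_order all_algebra.
From mathcomp Require Import reals exp.
From mathcomp Require Import zify lra.
Import Order.TTheory GRing.Theory Num.Theory.
Set Implicit Arguments. Unset Strict Implicit. Unset Printing Implicit Defensive.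
Local Open Scope ring_scope.

Lemma card_ffun_agree (aT rT : finType) (P : {set aT}) (g : aT -> rT) :
  #|[set f : {ffun aT -> rT} | [forall a in P, f a == g a]]| =
  (#|rT| ^ (#|aT| - #|P|))%N.
Proof.
pose F a : pred rT := if a \in P then pred1 (g a) else predT.
have -> : #|[set f : {ffun aT -> rT} | [forall a in P, f a == g a]]| =
          #|family F|.
  apply: eq_card => f; rewrite inE; apply/forall_inP/familyP => /= agree a.
    by rewrite /F; case: ifP => // aP; rewrite inE /=; apply: agree.
  by move=> aP; have := agree a; rewrite /F aP inE.
rewrite card_family foldrE big_image /=.
rewrite (eq_bigr (fun a => if a \notin P then #|rT| else 1%N)); last first.
  by move=> a _; rewrite /F; case: ifP => _; rewrite ?card1.
rewrite -big_mkcond /= prod_nat_const; congr (_ ^ _)%N.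
by rewrite -(cardC (mem P)) addKn; apply: eq_card => a; rewrite !inE.
Qed.

Lemma sw_const (C : finType) n (A : 'I_n -> {set C}) (W : {set C}) m :
  (forall i, #|A i :&: W| = m) -> sw A W = (n * m)%N.
Proof.
by move=> cardAW; rewrite /sw (eq_bigr _ (fun i _ => cardAW i)) sum_nat_const card_ord.
Qed.

Lemma util_ratio_le (R : realType) (C : finType) n (A : 'I_n -> {set C}) k
    (W W' : {set C}) :
  #|W'| = k -> (0 < sw A W')%N ->
  util_ratio A k R W <= (sw A W)%:R / (sw A W')%:R :> R.
Proof.
move=> cardW' sw_gt0.
rewrite /util_ratio ler_wpM2l ?ler0n // lef_pV2 ?posrE ?ltr0n //.
  by rewrite ler_nat; apply: leq_bigmax_cond; rewrite cardW'.
by apply: leq_trans sw_gt0 _; apply: leq_bigmax_cond; rewrite cardW'.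
Qed.

Lemma issue_group_bound r D p :
  (0 < D)%N -> (r <= D ^ D)%N -> (D < p <= r)%N -> (r * D ^ (r - p) * D <= D ^ r)%N.
Proof.
move=> D_gt0 rD /andP [Dp pr].
apply: (@leq_trans (D ^ D * D ^ (r - p) * D)); first by rewrite !leq_mul2r rD !orbT.
by rewrite -expnD -expnSr leq_pexp2l //; lia.
Qed.

Lemma ler_div_exprS_powR (R : realType) (x c : R) (d : nat) :
  1 <= x -> 2 <= c * d.+2%:R -> x / x ^+ d.+1 <= (powR (x ^+ d.+2) (1 - c))^-1.
Proof.
move=> x_ge1 cd.
have x_gt0 : 0 < x := lt_le_trans ltr01 x_ge1.
rewrite exprSr invfM mulrCA mulfV ?gt_eqF // mulr1.
rewrite lef_pV2 ?posrE ?exprn_gt0 ?powR_gt0 ?exprn_gt0 //.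
rewrite -(powR_mulrn _ (ltW x_gt0)) -powRrM -(powR_mulrn _ (ltW x_gt0)).
apply: ler_powR => //.
move: cd; rewrite -addn2 natrD; lra.
Qed.

Section DistrictsAndIssues.
Variables r D : nat.
Hypotheses (r_gt0 : (0 < r)%N) (D_gt0 : (0 < D)%N).

(* [inl (u, t)] is the [t]-th local candidate of district [u] and [inr (a, t)]
   the [t]-th option on issue [a]; a voter is a district together with an
   option on every issue. *)
Definition candidate := (('I_r * 'I_D) + ('I_r * 'I_D))%type.
Definition voter := ('I_r * {ffun 'I_r -> 'I_D})%type.

Definition approval (x : voter) : {set candidate} :=
  [set c | match c with inl p => x.1 == p.1 | inr p => x.2 p.1 == p.2 end].

Definition nvoters := #|{: voter}|.
Definition ballot (i : 'I_nvoters) : {set candidate} := approval (enum_val i).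

Definition local : {set candidate} := [set inl p | p : 'I_r * 'I_D].
Definition issues : {set candidate} := [set inr p | p : 'I_r * 'I_D].

Lemma card_voters : nvoters = (r * D ^ r)%N.
Proof. by rewrite /nvoters card_prod card_ffun !card_ord. Qed.

Lemma card_local : #|local| = (r * D)%N.
Proof. by rewrite card_imset ?cardsT ?card_prod ?card_ord //; apply: inl_inj. Qed.

Lemma card_issues : #|issues| = (r * D)%N.
Proof. by rewrite card_imset ?cardsT ?card_prod ?card_ord //; apply: inr_inj. Qed.

Lemma inl_local p : inl p \in local.
Proof. exact: imset_f. Qed.

Lemma inr_local p : (inr p \in local) = false.
Proof. by apply/imsetP => -[]. Qed.

Lemma inl_issues p : (inl p \in issues) = false.
Proof. by apply/imsetP => -[]. Qed.

Lemma inr_issues p : inr p \in issues.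
Proof. exact: imset_f. Qed.

Lemma card_approval_local x : #|approval x :&: local| = D.
Proof.
have -> : approval x :&: local = [set inl (x.1, t) | t : 'I_D].
  apply/setP => -[[u t] | p]; rewrite !inE ?inl_local ?inr_local ?andbT ?andbF /=.
    by apply/eqP/imsetP => [<- | [t' _ [-> _]] //]; exists t.
  by apply/esym/imsetP => -[].
by rewrite card_imset ?card_ord // => t1 t2 [].
Qed.

Lemma card_approval_issues x : #|approval x :&: issues| = r.
Proof.
have -> : approval x :&: issues = [set inr (a, x.2 a) | a : 'I_r].
  apply/setP => -[p | [a t]]; rewrite !inE ?inl_issues ?inr_issues ?andbT ?andbF /=.
    by apply/esym/imsetP => -[].
  by apply/eqP/imsetP => [<- | [a' _ [-> ->]] //]; exists a.
by rewrite card_imset ?card_ord // => a1 a2 [].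
Qed.

Lemma card_supporters_local p : #|[set x | inl p \in approval x]| = (D ^ r)%N.
Proof.
have -> : [set x | inl p \in approval x] = [set (p.1, v) | v : {ffun 'I_r -> 'I_D}].
  apply/setP => -[u v]; rewrite !inE /=.
  by apply/eqP/imsetP => [-> | [v' _ [-> _]] //]; exists v.
by rewrite card_imset ?card_ffun ?card_ord // => v1 v2 [].
Qed.

Lemma util_ratio_local_le (R : realType) :
  util_ratio ballot (r * D) R local <= D%:R / r%:R :> R.
Proof.
have n_gt0 : (0 < nvoters)%N by rewrite card_voters muln_gt0 r_gt0 expn_gt0 D_gt0.
apply: le_trans (util_ratio_le R local card_issues _) _.
  by rewrite (sw_const (A := ballot) (fun i => card_approval_issues _)) muln_gt0 n_gt0.
rewrite (sw_const (A := ballot) (fun i => card_approval_local _)).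
rewrite (sw_const (A := ballot) (fun i => card_approval_issues _)).
by rewrite !natrM -mulf_div divff ?mul1r // pnatr_eq0 -lt0n.
Qed.

Lemma affordable_local (R : realType) : affordable ballot (r * D) R local.
Proof.
have DXr_gt0 : 0 < (D ^ r)%:R :> R by rewrite ltr0n expn_gt0 D_gt0.
pose price : R := (D ^ r)%:R^-1.
exists (fun i c => if c \in ballot i :&: local then price else 0); split.
- by move=> i c; case: ifP => _; rewrite // invr_ge0 ltW.
- by move=> i c cNA; rewrite inE (negbTE cNA).
- move=> i; rewrite -big_mkcond /= sumr_const card_approval_local card_voters.
  rewrite !natrM -mulf_div divff ?mul1r ?pnatr_eq0 -?lt0n //.
  by rewrite mulr_natl.
- move=> _ /imsetP [p _ ->].
  rewrite -(big_enum_val (A := {: voter})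
    (fun x => if inl p \in approval x :&: local then price else 0)) /=.
  under eq_bigr => x _ do rewrite inE inl_local andbT.
  rewrite -big_mkcond sumr_const -cardsE card_supporters_local.
  by rewrite -mulr_natr mulVf // gt_eqF.
- by move=> c cNW; apply: big1 => i _; rewrite inE (negbTE cNW) andbF.
Qed.

Lemma valid_instance_local : valid_instance candidate nvoters (r * D).
Proof.
rewrite /valid_instance card_sum card_prod !card_ord card_voters.
by rewrite addn_gt0 !muln_gt0 expn_gt0 r_gt0 D_gt0 leq_addr.
Qed.

Definition common (S : {set voter}) : {set candidate} := \bigcap_(x in S) approval x.

Definition agreed_issues (S : {set voter}) (x0 : voter) : {set 'I_r} :=
  [set a | inr (a, x0.2 a) \in common S].

Lemma common_local_small (S : {set voter}) (p : 'I_r * 'I_D) :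
  inl p \in common S -> (#|S| <= D ^ r)%N.
Proof.
move=> /bigcapP pS; rewrite -(card_supporters_local p).
by apply/subset_leq_card/subsetP => x xS; rewrite inE pS.
Qed.

Lemma card_common_le_agreed (S : {set voter}) (x0 : voter) :
  x0 \in S -> (forall p, inl p \notin common S) ->
  (#|common S| <= #|agreed_issues S x0|)%N.
Proof.
move=> x0S no_local.
apply: leq_trans (leq_imset_card (fun a => inr (a, x0.2 a)) _).
apply/subset_leq_card/subsetP => -[p | [a t]] cS.
  by rewrite (negbTE (no_local p)) in cS.
have /bigcapP /(_ x0 x0S) := cS; rewrite inE /= => /eqP ta; subst t.
by apply: (imset_f (fun a => inr (a, x0.2 a))); rewrite inE.
Qed.

Lemma card_agreeing_le (S : {set voter}) (x0 : voter) :
  (#|S| <= r * D ^ (r - #|agreed_issues S x0|))%N.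
Proof.
set P := agreed_issues S x0.
pose agreeing := [set v : {ffun 'I_r -> 'I_D} | [forall a in P, v a == x0.2 a]].
have -> : (r * D ^ (r - #|P|))%N = #|setX [set: 'I_r] agreeing|.
  by rewrite cardsX cardsT card_ffun_agree !card_ord.
apply/subset_leq_card/subsetP => x xS; rewrite !inE /=.
apply/forall_inP => a; rewrite inE => /bigcapP /(_ x xS).
by rewrite inE.
Qed.

Lemma cohesive_group_small (S : {set voter}) (l : nat) :
  (r <= D ^ D)%N -> (D < l)%N -> (l <= #|common S|)%N -> (#|S| * D < l * D ^ r)%N.
Proof.
move=> rD Dl lS.
suff small : (#|S| * D <= D ^ r * D)%N.
  by apply: leq_ltn_trans small _; rewrite mulnC ltn_pmul2r ?expn_gt0 ?D_gt0.
rewrite leq_mul2r; apply/orP; right.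
have [-> | [x0 x0S]] := set_0Vmem S; first by rewrite cards0.
have [p /= pS | no_local] := pickP [pred p | inl p \in common S].
  exact: common_local_small pS.
have lP := leq_trans lS (card_common_le_agreed x0S (fun p => negbT (no_local p))).
have Pr : (#|agreed_issues S x0| <= r)%N by rewrite -[r in (_ <= r)%N]card_ord max_card.
apply: leq_trans (card_agreeing_le S x0) _.
apply: leq_trans (issue_group_bound D_gt0 rD _); first exact: leq_pmulr.
by rewrite (leq_trans Dl lP) Pr.
Qed.

Lemma EJR_local (R : realType) : (r <= D ^ D)%N -> EJR ballot (r * D) R local.
Proof.
move=> rD l N' l_gt0 _ large cohesive.
have {large} large : (l * nvoters <= #|N'| * (r * D))%N.
  by move: large; rewrite ler_pdivrMr ?ltr0n ?muln_gt0 ?r_gt0 // -!natrM ler_nat.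
pose S := enum_val @: N'.
have cardS : #|S| = #|N'| by rewrite card_imset //; apply: enum_val_inj.
have commonS : \bigcap_(i in N') ballot i = common S.
  by rewrite /common big_imset //; apply: in2W enum_val_inj.
have [lD | Dl] := leqP l D.
  have : (0 < #|N'|)%N.
    rewrite lt0n; apply: contraTneq large => ->.
    by rewrite mul0n -ltnNge card_voters !muln_gt0 l_gt0 r_gt0 expn_gt0 D_gt0.
  by case/card_gt0P => i iN'; exists i; rewrite // card_approval_local.
rewrite commonS in cohesive; have := cohesive_group_small rD Dl cohesive.
rewrite cardS ltnNge => /negP[].
by rewrite -(leq_pmul2l r_gt0) mulnCA [(r * (_ * D))%N]mulnCA -card_voters.
Qed.

End DistrictsAndIssues.

Theorem theorem2 (R : realType) (c : R) :
  0 < c -> c < 1 ->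
  exists K : R, 0 < K /\
    forall m : nat, exists k : nat, (m <= k)%N /\ (0 < k)%N /\
      exists (C : finType) (n : nat) (A : 'I_n -> {set C}) (W : {set C}),
        valid_instance C n k /\
        @committee C k W /\
        @exhaustive C k W /\
        @affordable C n A k R W /\
        @EJR C n A k R W /\
        @util_ratio C n A k R W <= K / powR (k%:R) (1 - c).
Proof.
move=> c_gt0 _; exists 1; split=> // m.
have [N0 cN0] : exists N0 : nat, 2 / c < N0%:R.
  by exists (Num.Def.archi_bound (2 / c)); apply: archi_boundP; rewrite divr_ge0 // ltW.
pose d := maxn m N0; pose D := d.+1; pose r := (D ^ D)%N.
have D_gt0 : (0 < D)%N by [].
have r_gt0 : (0 < r)%N by rewrite expn_gt0.
have cD : 2 <= c * d.+2%:R.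
  rewrite -ler_pdivrMl // mulrC; apply: ltW (lt_le_trans cN0 _).
  by rewrite ler_nat /d; lia.
exists (r * D)%N; split; last split.
- by apply: leq_trans (leq_pmull D r_gt0); rewrite /D /d; lia.
- by rewrite muln_gt0 r_gt0.
exists (candidate r D), (nvoters r D), (@ballot r D), (local r D).
split; first exact: valid_instance_local r_gt0 D_gt0.
split; first by rewrite /committee card_local.
split; first by rewrite /exhaustive card_local.
split; first exact: affordable_local r_gt0 D_gt0 R.
split; first exact: EJR_local r_gt0 D_gt0 R (leqnn _).
apply: le_trans (util_ratio_local_le r_gt0 D_gt0 R) _.
by rewrite div1r natrM natrX -exprSr ler_div_exprS_powR ?ler1n.
Qed.
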